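(* For every positive integer $d$ there is a convex lattice polytope in $\mathbb{R}^d$ (all vertices in $\mathbb{Z}^d$) with at least $2d$ vertices, containing no point of $\mathbb{Z}^d$ in its interior, all of whose facets are simplices. *)

From HB Require Import structures.
From mathcomp Require Import all_boot all_order all_algebra.
From mathcomp Require Import all_classical all_reals topology normedtype.
Set Implicit Arguments. Unset Strict Implicit. Unset Printing Implicit Defensive.
Import Order.TTheory GRing.Theory Num.Theory.
Import numFieldNormedType.Exports.
Local Open Scope classical_set_scope.
Local Open Scope ring_scope.

(* Points of R^d are row vectors 'rV[R]_d, with the usual (product/sup-norm)
   topology of MathComp-Analysis. *)
Section Polytopes.
Variables (R : realType) (d : nat).
Implicit Types (V S : seq 'rV[R]_d) (x y : 'rV[R]_d).

Definition dotv (a x : 'rV[R]_d) : R := (a *m x^T) 0 0.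

Definition intvec (z : 'rV[int]_d) : 'rV[R]_d := map_mx (fun k : int => k%:~R) z.

Definition conv S : set 'rV[R]_d :=
  [set x | exists l : 'I_(size S) -> R,
     (forall i, 0 <= l i) /\ \sum_i l i = 1 /\ x = \sum_i l i *: S`_i].

Definition extreme (P : set 'rV[R]_d) x : Prop :=
  P x /\ forall y z (t : R), P y -> P z -> 0 < t < 1 ->
    x = t *: y + (1 - t) *: z -> y = x /\ z = x.

Definition aff_indep S : Prop :=
  forall l : 'I_(size S) -> R, \sum_i l i = 0 -> \sum_i l i *: S`_i = 0 ->
    forall i, l i = 0.

Definition supporting (P : set 'rV[R]_d) (a : 'rV[R]_d) (b : R) : Prop :=
  a != 0 /\ (forall x, P x -> dotv a x <= b) /\ (exists x, P x /\ dotv a x = b).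

Definition face_verts V (a : 'rV[R]_d) (b : R) : seq 'rV[R]_d :=
  [seq v <- V | dotv a v == b].

(* the face of conv V cut out by the supporting hyperplane <a,x> = b is a
   facet, i.e. has dimension d-1 (it contains d affinely independent vertices) *)
Definition is_facet V (a : 'rV[R]_d) (b : R) : Prop :=
  supporting (conv V) a b /\
  exists s, {subset s <= face_verts V a b} /\ size s = d /\ aff_indep s.

Definition simplicial V : Prop :=
  forall a b, is_facet V a b -> aff_indep (face_verts V a b).

End Polytopes.

From HB Require Import structures.
From mathcomp Require Import all_boot all_order all_algebra.
From mathcomp Require Import all_classical all_reals topology normedtype.
From mathcomp Require Import lra.
Set Implicit Arguments. Unset Strict Implicit. Unset Printing Implicit Defensive.
Import Order.TTheory GRing.Theory Num.Theory.
Import numFieldNormedType.Exports.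
Local Open Scope classical_set_scope.
Local Open Scope ring_scope.

(* The polytope is an affine image of the cross-polytope.  With c = (1/2, ..., 1/2),
   its 2d vertices are c +- w_i / 2, where w_0 = (1, ..., 1) and w_i = w_0 - 2 e_i
   for i > 0; the w_i are linearly independent +-1 vectors, so the vertices are
   0/1 vectors.  A supporting hyperplane through both c + w_i / 2 and c - w_i / 2
   passes through c; as every c +- w_j / 2 lies on one side of it, it is then
   orthogonal to all the w_j, which span R^d.  So a facet takes at most one vertex
   from each antipodal pair, and such vertices are affinely independent.  The polytope lies
   in the unit cube, whose interior has no lattice point, and its vertices are
   extreme because they are vertices of the cube. *)

Section ConvexHull.
Variables (R : realType) (d : nat).
Implicit Types (S : seq 'rV[R]_d) (v x : 'rV[R]_d).

Lemma conv_mem S v : v \in S -> conv S v.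
Proof.
rewrite -index_mem => vS; pose k0 := Ordinal vS.
exists (fun k => (k == k0)%:R); split; first by move=> k; rewrite ler0n.
split; rewrite (bigD1 k0) //= eqxx ?scale1r ?nth_index -?index_mem // big1 ?addr0 //.
  by move=> k /negbTE->.
by move=> k /negbTE->; rewrite scale0r.
Qed.

Lemma conv_big (T : Type) (t0 : T) (s : seq T) (h : T -> 'rV[R]_d) (l : T -> R) :
  (forall t, 0 <= l t) -> \sum_(t <- s) l t = 1 ->
  conv (map h s) (\sum_(t <- s) l t *: h t).
Proof.
move=> l_ge0 l_sum1.
have reindex (V : nmodType) (F : T -> V) :
    \sum_(k < size (map h s)) F (nth t0 s k) = \sum_(t <- s) F t.
  by rewrite (big_nth t0) big_mkord size_map.
exists (fun k => l (nth t0 s k)); split => //; split; first by rewrite reindex.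
rewrite -reindex; apply: eq_bigr => k _; rewrite (nth_map t0) // -(size_map h).
exact: ltn_ord.
Qed.

Lemma conv_coord_bound S j (lo hi : R) :
  (forall v, v \in S -> lo <= v 0 j <= hi) ->
  forall x, conv S x -> lo <= x 0 j <= hi.
Proof.
move=> S_bound x [l [l_ge0 [l_sum1 ->]]].
have S_k (k : 'I_(size S)) : lo <= S`_k 0 j <= hi by apply/S_bound/mem_nth.
rewrite summxE -[lo]mul1r -[hi]mul1r -l_sum1 !mulr_suml.
by apply/andP; split; apply: ler_sum => k _; rewrite mxE ler_wpM2l //;
  case/andP: (S_k k).
Qed.

End ConvexHull.

Section UnitCube.
Variables (R : realType) (d : nat).
Implicit Types (S : seq 'rV[R]_d) (v x : 'rV[R]_d).

Definition unit_cube : set 'rV[R]_d := [set x | forall j, 0 <= x 0 j <= 1].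

Definition cube_vertex x : Prop := forall j, x 0 j = 0 \/ x 0 j = 1.

Lemma cube_vertex_unit_cube x : cube_vertex x -> unit_cube x.
Proof. by move=> x01 j; case: (x01 j) => ->; rewrite lexx ler01. Qed.

Lemma conv_sub_unit_cube S :
  (forall v, v \in S -> unit_cube v) -> conv S `<=` unit_cube.
Proof. by move=> S_cube x Sx j; apply: conv_coord_bound Sx => v /S_cube. Qed.

Lemma extreme_cube_vertex (P : set 'rV[R]_d) v :
  P `<=` unit_cube -> P v -> cube_vertex v -> extreme P v.
Proof.
move=> P_cube Pv v01; split=> // y z t Py Pz /andP[t_gt0 t_lt1] vE.
have coord j : y 0 j = v 0 j /\ z 0 j = v 0 j.
  have /andP[y_ge0 y_le1] := P_cube y Py j.
  have /andP[z_ge0 z_le1] := P_cube z Pz j.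
  have := congr1 (fun w : 'rV_d => w 0 j) vE; rewrite !mxE /=.
  by case: (v01 j) => -> vj; split; nra.
by split; apply/rowP => j; case: (coord j).
Qed.

Lemma intvec_notin_interior (P : set 'rV[R]_d) (z : 'rV[int]_d) :
  (0 < d)%N -> P `<=` unit_cube -> ~ P° (intvec R z).
Proof.
move=> d_gt0 P_cube /nbhs_ballP[e /= e_gt0 zeP].
pose j0 := Ordinal d_gt0; pose k := z 0 j0.
pose s : R := if k <= 0 then - (e / 2) else e / 2.
have /(_ j0) : unit_cube (intvec R z + const_mx s).
  apply/P_cube/zeP; split=> // i j; rewrite /ball /= !mxE opprD addNKr normrN.
  by rewrite /s; case: ifP; rewrite ?normrN ger0_norm; lra.
rewrite !mxE -/k /s => /andP[lo hi]; case: (lerP k 0) => [k_le0|k_gt0] in lo hi *.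
  by rewrite -(ler_int R) in k_le0; lra.
by rewrite gtz0_ge1 -(ler_int R) in k_gt0; lra.
Qed.

End UnitCube.

Section DotProduct.
Variables (R : realType) (d : nat).
Implicit Types (a x y : 'rV[R]_d).

Lemma dotvDr a x y : dotv a (x + y) = dotv a x + dotv a y.
Proof. by rewrite /dotv linearD /= mulmxDr mxE. Qed.

Lemma dotvZr a k x : dotv a (k *: x) = k * dotv a x.
Proof. by rewrite /dotv linearZ /= -scalemxAr mxE. Qed.

Lemma dotv_row a (M : 'M[R]_d) i : dotv a (row i M) = (M *m a^T) i 0.
Proof.
rewrite /dotv -[a]trmxK -trmx_mul trmxK !mxE.
by apply: eq_bigr => j _; rewrite mxE.
Qed.

End DotProduct.

Lemma sum_bool_pair (V : nmodType) (I : finType) (F : bool * I -> V) :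
  \sum_t F t = \sum_i (F (true, i) + F (false, i)).
Proof.
rewrite (eq_bigr (fun t => F (t.1, t.2))) => [|[] //].
by rewrite -(pair_bigA _ (fun b i => F (b, i))) big_bool -big_split.
Qed.

Section CrossPolytope.
Variables (R : realType) (n : nat) (c : 'rV[R]_n) (M : 'M[R]_n).
Hypothesis M_unit : M \in unitmx.

Definition cross_vertex (t : bool * 'I_n) : 'rV[R]_n := c + (-1) ^+ t.1 *: row t.2 M.

Definition cross_verts : seq 'rV[R]_n := map cross_vertex (enum {: bool * 'I_n}).

Lemma cross_vertexE t : cross_vertex t = c + ((-1) ^+ t.1 *: 'e_t.2) *m M.
Proof. by rewrite /cross_vertex -scalemxAl -rowE. Qed.

Lemma cross_vertex_inj : injective cross_vertex.
Proof.
move=> [b i] [b' j]; rewrite !cross_vertexE => /addrI/(row_free_inj _).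
rewrite row_free_unit => /(_ M_unit)/rowP/(_ i); rewrite !mxE !eqxx /=.
have [<-|ij] := eqVneq i j; last by rewrite mulr0 mulr1 => /eqP; rewrite signr_eq0.
by rewrite !mulr1 => /signr_inj->.
Qed.

Lemma uniq_cross_verts : uniq cross_verts.
Proof. by rewrite map_inj_uniq ?enum_uniq //; exact: cross_vertex_inj. Qed.

Lemma conv_cross_l1_ball (u : 'rV[R]_n) : (0 < n)%N ->
  \sum_i `|u 0 i| <= 1 -> conv cross_verts (c + u *m M).
Proof.
(* the slack 1 - |u|_1 is spread evenly over the 2n vertices *)
move=> n_gt0 u_le1; pose r := (1 - \sum_i `|u 0 i|) / n%:R.
have r_ge0 : 0 <= r by rewrite divr_ge0 ?ler0n // subr_ge0.
pose l (t : bool * 'I_n) := (`|u 0 t.2| + (-1) ^+ t.1 * u 0 t.2 + r) / 2.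
have l_ge0 t : 0 <= l t.
  have := ler_norm (u 0 t.2); have := ler_norm (- u 0 t.2); rewrite normrN.
  by rewrite /l; case: t.1; rewrite ?expr1 ?expr0; lra.
have l_pair i : l (true, i) + l (false, i) = `|u 0 i| + r.
  by rewrite /l /= expr1 expr0; lra.
have l_diff i : l (false, i) - l (true, i) = u 0 i.
  by rewrite /l /= expr1 expr0; lra.
have l_sum1 : \sum_(t <- enum {: bool * 'I_n}) l t = 1.
  rewrite big_enum sum_bool_pair (eq_bigr _ (fun i _ => l_pair i)) big_split /=.
  by rewrite sumr_const card_ord -mulr_natr divfK ?pnatr_eq0 -?lt0n // addrC subrK.
have := conv_big (false, Ordinal n_gt0) cross_vertex l_ge0 l_sum1.
congr conv; rewrite big_enum sum_bool_pair mulmx_sum_row.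
rewrite -[c]scale1r -l_sum1 big_enum sum_bool_pair scaler_suml -big_split.
apply: eq_bigr => i _; rewrite -l_diff /cross_vertex /= expr1 expr0 scaleN1r scale1r.
by rewrite scalerBr scalerDr scalerDl scalerBl addrACA [- _ + _]addrC.
Qed.

Lemma cross_center_interior : (0 < n)%N -> (conv cross_verts)° c.
Proof.
(* K bounds the norm of [invmx M] from the sup-norm to the l1-norm *)
move=> n_gt0; pose K := \sum_j \sum_i `|invmx M i j|.
have K_ge0 : 0 <= K by apply: sumr_ge0 => j _; apply: sumr_ge0.
have K1_gt0 : 0 < 1 + K by lra.
apply/nbhs_ballP; exists (1 + K)^-1 => /=; first by rewrite invr_gt0.
move=> y [_ cy]; set e := (1 + K)^-1 in cy.
rewrite -[y](subrKC c) -[y - c](mulmxKV M_unit); apply: conv_cross_l1_ball => //.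
have yc i : `|(y - c) 0 i| <= e by apply/ltW; rewrite !mxE distrC; exact: cy.
apply: (@le_trans _ _ (e * K)).
  rewrite /K mulr_sumr; apply: ler_sum => j _; rewrite mxE mulr_sumr.
  apply: (le_trans (ler_norm_sum _ _ _)); apply: ler_sum => i _.
  by rewrite normrM ler_wpM2r.
by rewrite mulrC ler_pdivrMr // mul1r lerDr ler01.
Qed.

Lemma dotv_cross_vertex a t :
  dotv a (cross_vertex t) = dotv a c + (-1) ^+ t.1 * (M *m a^T) t.2 0.
Proof. by rewrite dotvDr dotvZr dotv_row. Qed.

Lemma cross_face_no_antipodes a b i : a != 0 ->
  (forall t, dotv a (cross_vertex t) <= b) ->
  dotv a (cross_vertex (false, i)) = b -> dotv a (cross_vertex (true, i)) <> b.
Proof.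
move=> a_neq0 a_le; rewrite !dotv_cross_vertex /= expr0 expr1 !mul1r => e_false e_true.
suff Ma0 : M *m a^T = 0.
  by move: a_neq0; rewrite -trmx_eq0 -(mulKmx M_unit a^T) Ma0 mulmx0 eqxx.
apply/matrixP => j k; rewrite [k]ord1 [RHS]mxE.
have := a_le (false, j); have := a_le (true, j).
by rewrite !dotv_cross_vertex /= expr0 expr1 !mul1r; lra.
Qed.

Lemma aff_indep_cross_verts (s : seq (bool * 'I_n)) :
  uniq (map snd s) -> aff_indep (map cross_vertex s).
Proof.
move=> s_uniq l l_sum0 l_comb0 k.
(* the index k shows that s is nonempty, which provides a default element *)
have t0 : bool * 'I_n by case: s k {s_uniq l l_sum0 l_comb0} => [[]|t].
have j_s (j : 'I_(size (map cross_vertex s))) : (j < size s)%N.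
  by rewrite -(size_map cross_vertex).
pose ts (j : 'I_(size (map cross_vertex s))) := nth t0 s j.
have vE (j : 'I_(size (map cross_vertex s))) :
    (map cross_vertex s)`_j = cross_vertex (ts j).
  by rewrite (nth_map t0).
have ts_inj j j' : (ts j).2 = (ts j').2 -> j = j'.
  move=> e; apply/val_inj/eqP.
  rewrite -(nth_uniq t0.2 _ _ s_uniq) ?[size (map snd s)]size_map ?j_s //.
  by rewrite !(nth_map t0) ?j_s //; apply/eqP.
pose w : 'rV[R]_n := \sum_j l j *: ((-1) ^+ (ts j).1 *: 'e_(ts j).2).
have w0 : w = 0.
  suff: w *m M = 0 by move/(congr1 (mulmx^~ (invmx M))); rewrite mulmxK // mul0mx.
  move: l_comb0; under eq_bigr do rewrite vE cross_vertexE scalerDr scalemxAl.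
  by rewrite big_split /= -scaler_suml l_sum0 scale0r add0r mulmx_suml.
have := congr1 (fun v : 'rV_n => v 0 (ts k).2) w0; rewrite summxE mxE.
rewrite (bigD1 k) //= big1 ?addr0 => [|k' k'k]; rewrite !mxE ?eqxx /=.
  by rewrite mulr1 => /eqP; rewrite mulf_eq0 signr_eq0 orbF => /eqP.
case: eqVneq => [/ts_inj k'E|]; last by rewrite mulr0 mulr0.
by rewrite k'E eqxx in k'k.
Qed.

Lemma cross_simplicial : simplicial cross_verts.
Proof.
move=> a b [[a_neq0 [a_le _]] _]; rewrite /face_verts filter_map.
apply: aff_indep_cross_verts; rewrite map_inj_in_uniq ?filter_uniq -?enumT ?enum_uniq //.
have vert_le t : dotv a (cross_vertex t) <= b.
  by apply/a_le/conv_mem/map_f; rewrite mem_enum.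
move=> [b1 i] [b2 j]; rewrite !mem_filter /= => /andP[/eqP face1 _] /andP[/eqP face2 _] ij.
subst j; case: b1 b2 face1 face2 => [] [] // face1 face2; exfalso.
  exact: (cross_face_no_antipodes a_neq0 vert_le face2 face1).
exact: (cross_face_no_antipodes a_neq0 vert_le face1 face2).
Qed.

End CrossPolytope.

Section LatticeCrossPolytope.
Variable n : nat.

Definition sign_flip (i j : 'I_n.+1) : bool := (i == j) && (i != ord0).

Definition sign_pattern (R : pzRingType) : 'M[R]_n.+1 :=
  \matrix_(i, j) (-1) ^+ sign_flip i j.

Lemma sign_pattern_unit (R : realFieldType) : sign_pattern R \in unitmx.
Proof.
rewrite -row_free_unit; apply: inj_row_free => v /rowP v_pattern.
have colE j : (v *m sign_pattern R) 0 j = \sum_i v 0 i - (j != ord0)%:R * 2 * v 0 j.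
  rewrite mxE (bigD1 j) //= [in RHS](bigD1 j) //= !mxE /sign_flip eqxx /=.
  rewrite (eq_bigr (fun i => v 0 i)) => [|i ij]; last first.
    by rewrite mxE /sign_flip (negbTE ij) mulr1.
  by case: (j != ord0); rewrite /= ?expr1 ?expr0; lra.
have sum0 : \sum_i v 0 i = 0.
  by have := colE ord0; rewrite v_pattern !mxE eqxx /=; lra.
have vj j : j != ord0 -> v 0 j = 0.
  by move=> j0; have := colE j; rewrite v_pattern !mxE sum0 j0 /=; lra.
apply/rowP => j; rewrite mxE; have [->|/vj //] := eqVneq j ord0.
by move: sum0; rewrite (bigD1 ord0) //= big1 ?addr0 // => i /vj.
Qed.

Definition lattice_vertex (t : bool * 'I_n.+1) : 'rV[int]_n.+1 :=
  \row_j (t.1 == sign_flip t.2 j)%:R.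

Lemma intvec_lattice_vertex (R : realType) t :
  intvec R (lattice_vertex t) =
  cross_vertex (const_mx 2^-1) (2^-1 *: sign_pattern R) t.
Proof.
apply/rowP => j; rewrite !mxE; case: t => [[] i] /=; case: sign_flip => /=;
  rewrite ?expr1 ?expr0; lra.
Qed.

Lemma cube_vertex_lattice_vertex (R : realType) t :
  cube_vertex (intvec R (lattice_vertex t)).
Proof. by move=> j; rewrite !mxE; case: (_ == _); [right | left]. Qed.

End LatticeCrossPolytope.

Theorem proposition16 (R : realType) (d : nat) (hd : (0 < d)%N) :
  exists V : seq 'rV[int]_d,
    let W := map (@intvec R d) V in
    uniq V /\
    (2 * d <= size V)%N /\
    (forall v, v \in W -> extreme (conv W) v) /\
    (exists x, (conv W)° x) /\
    (forall z : 'rV[int]_d, ~ (conv W)° (intvec R z)) /\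
    simplicial W.
Proof.
case: d hd => // n _; set c : 'rV[R]_n.+1 := const_mx 2^-1.
set M := 2^-1 *: sign_pattern n R.
have M_unit : M \in unitmx.
  by rewrite unitmxZ ?sign_pattern_unit // unitfE invr_eq0 pnatr_eq0.
exists (map (@lattice_vertex n) (enum {: bool * 'I_n.+1})) => W.
have W_cross : W = cross_verts c M.
  by rewrite /W -map_comp; apply: eq_map => t; exact: intvec_lattice_vertex.
have W_vertex v : v \in W -> cube_vertex v.
  by rewrite /W -map_comp => /mapP[t _ ->]; exact: cube_vertex_lattice_vertex.
have W_cube : conv W `<=` @unit_cube R n.+1.
  by apply: conv_sub_unit_cube => v /W_vertex/cube_vertex_unit_cube.
split.
  by apply: (@map_uniq _ _ (@intvec R n.+1)); rewrite -/W W_cross uniq_cross_verts.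
split; first by rewrite size_map -cardE card_prod card_bool card_ord.
split.
  by move=> v vW; exact: extreme_cube_vertex W_cube (conv_mem vW) (W_vertex v vW).
split; first by exists c; rewrite W_cross; exact: cross_center_interior.
split; first by move=> z; exact: intvec_notin_interior W_cube.
by rewrite W_cross; exact: cross_simplicial.
Qed.
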